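(* The scheme $S_h$ is monotone: for all $t\in\mathbb{R}$, all $x\in\mathcal{X}_n$ and all $u,v:\mathcal{X}_n\to\mathbb{R}$ with $u\le v$ on $\mathcal{X}_n$, we have $S_h(u,t,x)\ge S_h(v,t,x)$.
   Context: Let $\Omega\subset\mathbb{R}^d$ be open and bounded and $\mathcal{X}_n=\{x_1,\dots,x_n\}\subset\bar\Omega$ a finite point cloud with resolution parameter $h>0$. Each $x\in\mathcal{X}_n$ has a neighbor set $N_h(x)\subset\mathcal{X}_n$; let $V_h(x):=\{y-x:y\in N_h(x)\}$, and let $d\theta := \max_{x\in\mathcal{X}_n}\max_{|p|=1}\min_{q\in V_h(x)}\arccos\left(\frac{p\cdot q}{|p||q|}\right)$. For $u:\mathcal{X}_n\to\mathbb{R}$, $t\in\mathbb{R}$, $x\in\mathcal{X}_n$, let \[ P_h^-(u,t,x) := \{p\in\mathbb{R}^d : -p\in V_h(x), \text{ and for all } y\in N_h(x),\ p\cdot(y-x)<0\implies u(y)\le t\}. \] Let $H:\mathbb{R}^{d\times d}_{sym}\times\mathbb{R}^d\times C^\infty(\mathbb{R}^d)\times\Omega\to\mathbb{R}$ be a given Hamiltonian, and let $F_h=F_h(p,u,t,x)$ (with $p\in\mathbb{R}^d$, $u:\mathcal{X}_n\to\mathbb{R}$, $t\in\mathbb{R}$, $x\in\mathcal{X}_n$) be a real-valued function satisfying: (F1) $F_h$ is monotone: $u\le v$ implies $F_h(p,u,t,x)\ge F_h(p,v,t,x)$ for all $p,t,x$; (F2) $F_h$ is continuous in $u$ and $t$;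 (F3) there are constants $C$ and $m_1,m_2\ge 1$ such that for all $x$, $p$ and $u\in C^\infty(\mathbb{R}^d)$, $|F_h(p,u,u(x),x) - H(\nabla^2 u(x),p,u,x)|\le C(h^{m_1}+d\theta^{m_2})$. The scheme is \[ S_h(u,t,x) := \begin{cases} \max_{p\in P_h^-(u,t,x)} F_h(p,u,t,x) & \text{if } P_h^-(u,t,x)\neq\emptyset,\\ -\infty & \text{otherwise.}\end{cases} \] *)

From HB Require Import structures.
From mathcomp Require Import all_boot all_order all_algebra.
From mathcomp Require Import all_classical all_reals all_analysis.
Set Implicit Arguments. Unset Strict Implicit. Unset Printing Implicit Defensive.
Import Order.TTheory GRing.Theory Num.Theory.
Local Open Scope ring_scope.

Definition dotv (R : realType) (d : nat) (p q : 'rV[R]_d) : R :=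
  \sum_(k < d) p 0 k * q 0 k.

(* The point cloud X_n = {pts i : i < n}; a grid function u : X_n -> R is
   represented by u : 'I_n -> R; the neighbour set N_h(x_i) by N i.
   V_h(x_i) = {pts j - pts i : j in N i}. *)

Definition Pminus (R : realType) (d n : nat) (pts : 'I_n -> 'rV[R]_d)
  (N : 'I_n -> {set 'I_n}) (u : 'I_n -> R) (t : R) (i : 'I_n) (p : 'rV[R]_d)
  : bool :=
  [exists j in N i, - p == pts j - pts i] &&
  [forall j in N i, (dotv p (pts j - pts i) < 0) ==> (u j <= t)].

(* Every p in P_h^- is of the form pts i - pts j with j in N i, so the max is
   taken over those j (repetitions do not affect a max). *)
Definition Sh (R : realType) (d n : nat) (pts : 'I_n -> 'rV[R]_d)
  (N : 'I_n -> {set 'I_n})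
  (F : 'rV[R]_d -> ('I_n -> R) -> R -> 'I_n -> R)
  (u : 'I_n -> R) (t : R) (i : 'I_n) : \bar R :=
  \big[Order.max/-oo%E]_(j in N i | Pminus pts N u t i (pts i - pts j))
     (F (pts i - pts j) u t i)%:E.

From HB Require Import structures.
From mathcomp Require Import all_boot all_order all_algebra.
From mathcomp Require Import all_classical all_reals all_analysis.
Import Order.TTheory GRing.Theory Num.Theory numFieldNormedType.Exports.
Local Open Scope ring_scope.
Local Open Scope classical_set_scope.

(* Lowering [u] enlarges the set of admissible directions [P_h^-], and by
   (F1) it raises every candidate value [F_h(p,u,t,x)]; both effects can only
   increase the maximum. *)

Lemma Pminus_antitone {R : realType} {d n : nat} {pts : 'I_n -> 'rV[R]_d}
    {N : 'I_n -> {set 'I_n}} {u v : 'I_n -> R} {t : R} {i : 'I_n}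
    {p : 'rV[R]_d} :
  (forall j, u j <= v j) -> Pminus pts N v t i p -> Pminus pts N u t i p.
Proof.
rewrite /Pminus => le_uv /andP[-> /forallP v_le_t] /=; apply/forallP => j.
apply/implyP => jN; apply/implyP => p_descent.
by move: (v_le_t j); rewrite jN p_descent /=; exact: le_trans (le_uv j).
Qed.

Theorem proposition2 (R : realType) (d n : nat)
  (Omega : set 'rV[R]_d) (pts : 'I_n -> 'rV[R]_d) (N : 'I_n -> {set 'I_n})
  (F : 'rV[R]_d -> ('I_n -> R) -> R -> 'I_n -> R) :
  open Omega -> bounded_set Omega ->
  injective pts -> (forall i, closure Omega (pts i)) ->
  (* (F1) monotonicity of F_h *)
  (forall p (u v : 'I_n -> R) t i, (forall j, u j <= v j) -> F p v t i <= F p u t i) ->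
  (* (F2) continuity of F_h in u and t *)
  (forall p i, continuous (fun ut : 'rV[R]_n * R => F p (fun j => ut.1 0 j) ut.2 i)) ->
  forall (t : R) (i : 'I_n) (u v : 'I_n -> R),
    (forall j, u j <= v j) -> (Sh pts N F v t i <= Sh pts N F u t i)%E.
Proof.
move=> _ _ _ _ F_antitone _ t i u v le_uv; rewrite /Sh.
set Fu := fun j => (F (pts i - pts j) u t i)%:E.
apply: (@le_trans _ _ (\big[Order.max/-oo%E]_(j in N i |
    Pminus pts N v t i (pts i - pts j)) Fu j)).
  by apply: le_bigmax2 => j _; rewrite lee_fin; apply: F_antitone.
apply: subset_bigmax_cond; apply/fintype.subsetP => j; rewrite !inE.
by case/andP=> -> /(Pminus_antitone le_uv).
Qed.
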